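(* Let $p\ge1$, $m\in\mathbb{N}$, $a,b>0$, $\beta\in\mathbb{R}^p$, let $A$ be a real $p\times s$ matrix with $\operatorname{rank}(A)=s\le p$, and let $\xi$ be a design on $\mathcal{X}$. Then $A^T\beta$ is identifiable for $\xi$ in the Poisson–Gamma model (i.e. $A=M(\xi;\beta)H$ for some $H\in\mathbb{R}^{p\times s}$) if and only if $A^T\beta$ is identifiable for $\xi$ in the Poisson model (i.e. $A=M_{Po}(\xi;\beta)H'$ for some $H'\in\mathbb{R}^{p\times s}$).
   Context: Let $\mathcal{X}\subseteq\mathbb{R}^k$ be a design region and $f=(1,f_1,\ldots,f_{p-1})^T:\mathcal{X}\to\mathbb{R}^p$ a vector of regression functions whose first component is the constant 1. A design $\xi$ is a probability measure on $\mathcal{X}$ with finite support $x_1,\ldots,x_l$ and weights $w_1,\ldots,w_l\ge0$, $\sum_j w_j=1$. The Poisson information matrix is $M_{Po}(\xi;\beta)=\sum_{j=1}^l w_j\exp(f(x_j)^T\beta)f(x_j)f(x_j)^T$, and the Poisson–Gamma information matrix is $M(\xi;\beta)=\frac{a}{b}\Bigl(M_{Po}(\xi;\beta)-\frac{M_{Po}(\xi;\beta)e_1e_1^TM_{Po}(\xi;\beta)}{e_1^TM_{Po}(\xi;\beta)e_1+b/m}\Bigr)$, where $e_1$ is the first standard unit vector of $\mathbb{R}^p$. *)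

From HB Require Import structures.
From mathcomp Require Import all_boot all_order all_algebra.
From mathcomp Require Import all_classical all_reals all_analysis.
Set Implicit Arguments. Unset Strict Implicit. Unset Printing Implicit Defensive.
Import Order.TTheory GRing.Theory Num.Theory.
Local Open Scope ring_scope.

Definition e1 (R : realType) (p : nat) : 'cV[R]_p :=
  \col_(i < p) (if val i == 0%N then 1 else 0).

Definition M_Po (R : realType) (k p l : nat) (f : 'rV[R]_k -> 'cV[R]_p)
  (xs : 'I_l -> 'rV[R]_k) (w : 'I_l -> R) (beta : 'cV[R]_p) : 'M[R]_p :=
  \sum_(j < l) (w j * expR (((f (xs j))^T *m beta) 0 0)) *:
                 (f (xs j) *m (f (xs j))^T).

Definition M_PG (R : realType) (k p l : nat) (a b : R) (m : nat)
  (f : 'rV[R]_k -> 'cV[R]_p)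
  (xs : 'I_l -> 'rV[R]_k) (w : 'I_l -> R) (beta : 'cV[R]_p) : 'M[R]_p :=
  let MP := M_Po f xs w beta in
  (a / b) *: (MP - (((e1 R p)^T *m MP *m e1 R p) 0 0 + b / m%:R)^-1 *:
                   (MP *m e1 R p *m (e1 R p)^T *m MP)).

Definition identifiable (R : realType) (p s : nat) (M : 'M[R]_p)
  (A : 'M[R]_(p, s)) : Prop :=
  exists H : 'M[R]_(p, s), A = M *m H.

(** The Poisson-Gamma information matrix factors as
    [M = (a/b) M_Po (I - c^-1 e1 e1^T M_Po)] with [c = e1^T M_Po e1 + b/m].
    The right factor is a rank-one update of the identity, invertible with
    inverse [I + (m/b) e1 e1^T M_Po] because [c] and [b/m] are nonzero
    ([M_Po] is positive semidefinite).  Hence [M] and [M_Po] have the same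
    column space, which is all that identifiability depends on. *)

From HB Require Import structures.
From mathcomp Require Import all_boot all_order all_algebra.
From mathcomp Require Import all_classical all_reals all_analysis.
From mathcomp Require Import ring.
Set Implicit Arguments. Unset Strict Implicit. Unset Printing Implicit Defensive.
Import Order.TTheory GRing.Theory Num.Theory.
Local Open Scope ring_scope.
Local Open Scope classical_set_scope.

Lemma mulmx_rank_one_sqr (F : comPzRingType) (p : nat)
    (u : 'cV[F]_p) (v : 'rV[F]_p) :
  u *m v *m (u *m v) = (v *m u) 0 0 *: (u *m v).
Proof.
by rewrite mulmxA -(mulmxA u) [in LHS](mx11_scalar (v *m u)) mul_mx_scalar
  -scalemxAl.
Qed.

Lemma rank_one_update_mulmxV (F : fieldType) (p : nat)
    (u : 'cV[F]_p) (v : 'rV[F]_p) (t : F) :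
  t != 0 -> (v *m u) 0 0 + t != 0 ->
  (1%:M - ((v *m u) 0 0 + t)^-1 *: (u *m v)) *m (1%:M + t^-1 *: (u *m v))
  = 1%:M.
Proof.
move=> t_neq0 c_neq0; set d := (v *m u) 0 0.
rewrite mulmxBl !mulmxDr !mulmx1 mul1mx -scalemxAl -!scalemxAr.
rewrite mulmx_rank_one_sqr -/d !scalerA -scalerDl -addrA -scalerBl.
suff -> : t^-1 - ((d + t)^-1 + (d + t)^-1 / t * d) = 0.
  by rewrite scale0r addr0.
by field; rewrite t_neq0 c_neq0.
Qed.

Lemma rank_one_update_unitmx (F : fieldType) (p : nat)
    (u : 'cV[F]_p) (v : 'rV[F]_p) (t : F) :
  t != 0 -> (v *m u) 0 0 + t != 0 ->
  1%:M - ((v *m u) 0 0 + t)^-1 *: (u *m v) \in unitmx.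
Proof.
move=> t_neq0 c_neq0.
by have [] := mulmx1_unit (rank_one_update_mulmxV t_neq0 c_neq0).
Qed.

Lemma outer_prod_quad_form (R : comPzRingType) (p : nat) (g x : 'cV[R]_p) :
  (x^T *m (g *m g^T) *m x) 0 0 = ((x^T *m g) 0 0) ^+ 2.
Proof.
rewrite mulmxA -mulmxA -[g^T *m x]trmxK trmx_mul trmxK.
by rewrite mxE big_ord1 [_^T _ _]mxE -[ord0]/(0 : 'I_1) expr2.
Qed.

Lemma psd_sum_outer_prod (R : realFieldType) (p n : nat)
    (c : 'I_n -> R) (g : 'I_n -> 'cV[R]_p) (x : 'cV[R]_p) :
  (forall j, 0 <= c j) ->
  0 <= (x^T *m (\sum_j c j *: (g j *m (g j)^T)) *m x) 0 0.
Proof.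
move=> c_ge0; rewrite mulmx_sumr mulmx_suml summxE; apply: sumr_ge0 => j _.
by rewrite -scalemxAr -scalemxAl mxE outer_prod_quad_form mulr_ge0 ?sqr_ge0.
Qed.

Lemma identifiable_scale (R : realType) (p s : nat) (c : R)
    (M : 'M[R]_p) (A : 'M[R]_(p, s)) :
  c != 0 -> identifiable (c *: M) A <-> identifiable M A.
Proof.
move=> c_neq0; split=> -[H ->].
  by exists (c *: H); rewrite -scalemxAl scalemxAr.
by exists (c^-1 *: H); rewrite -scalemxAr -scalemxAl scalerA mulVf // scale1r.
Qed.

Lemma identifiable_mulmx_unit (R : realType) (p s : nat)
    (M K : 'M[R]_p) (A : 'M[R]_(p, s)) :
  K \in unitmx -> identifiable (M *m K) A <-> identifiable M A.
Proof.
move=> K_unit; split=> -[H ->].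
  by exists (K *m H); rewrite mulmxA.
by exists (invmx K *m H); rewrite -mulmxA (mulmxA K) mulmxV // mul1mx.
Qed.

Lemma M_Po_psd (R : realType) (k p l : nat) (f : 'rV[R]_k -> 'cV[R]_p)
    (xs : 'I_l -> 'rV[R]_k) (w : 'I_l -> R) (beta x : 'cV[R]_p) :
  (forall j, 0 <= w j) -> 0 <= (x^T *m M_Po f xs w beta *m x) 0 0.
Proof.
by move=> w_ge0; apply: psd_sum_outer_prod => j; rewrite mulr_ge0 ?expR_ge0.
Qed.

Definition pg_factor (R : realType) (p : nat) (P : 'M[R]_p) (t : R) : 'M[R]_p :=
  1%:M - (((e1 R p)^T *m P *m e1 R p) 0 0 + t)^-1 *:
         (e1 R p *m ((e1 R p)^T *m P)).

Lemma pg_factor_unitmx (R : realType) (p : nat) (P : 'M[R]_p) (t : R) :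
  0 < t -> 0 <= ((e1 R p)^T *m P *m e1 R p) 0 0 -> pg_factor P t \in unitmx.
Proof.
move=> t_gt0 d_ge0; apply: rank_one_update_unitmx; first by rewrite gt_eqF.
by rewrite gt_eqF // ltr_wpDl.
Qed.

Lemma M_PG_pg_factor (R : realType) (k p l : nat) (a b : R) (m : nat)
    (f : 'rV[R]_k -> 'cV[R]_p) (xs : 'I_l -> 'rV[R]_k) (w : 'I_l -> R)
    (beta : 'cV[R]_p) :
  M_PG a b m f xs w beta =
  (a / b) *: (M_Po f xs w beta *m pg_factor (M_Po f xs w beta) (b / m%:R)).
Proof. by rewrite /M_PG /pg_factor mulmxBr mulmx1 -scalemxAr !mulmxA. Qed.

Theorem theorem3 (R : realType) (k p s l m : nat)
  (X : set 'rV[R]_k) (f : 'rV[R]_k -> 'cV[R]_p)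
  (hf1 : forall x : 'rV[R]_k, X x -> forall i : 'I_p, val i = 0%N -> f x i 0 = 1)
  (a b : R) (beta : 'cV[R]_p) (A : 'M[R]_(p, s))
  (xs : 'I_l -> 'rV[R]_k) (w : 'I_l -> R) :
  (0 < p)%N -> (0 < m)%N -> 0 < a -> 0 < b ->
  \rank A = s -> (s <= p)%N ->
  (forall j, X (xs j)) -> (forall j, 0 <= w j) -> \sum_(j < l) w j = 1 ->
  identifiable (M_PG a b m f xs w beta) A <->
  identifiable (M_Po f xs w beta) A.
Proof.
move=> _ m_gt0 a_gt0 b_gt0 _ _ _ w_ge0 _.
have ab_neq0 : a / b != 0 by rewrite mulf_neq0 ?invr_eq0 ?gt_eqF.
rewrite M_PG_pg_factor; apply: iff_trans (identifiable_scale _ _ ab_neq0) _.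
apply: identifiable_mulmx_unit; apply: pg_factor_unitmx; last exact: M_Po_psd.
by rewrite divr_gt0 ?ltr0n.
Qed.
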